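(* Let $n=p_1^{m_1}\cdots p_k^{m_k}$ with $m_i>1$ for at least one $i$. Then $\mathcal E_{\mathbb Z_n}\cong K_m\vee H$, where $K_m$ is the complete graph on $m=\prod_{i=1}^k m_i-1$ vertices (the essential nonzero proper ideals) and $H=\mathscr G\big[\mathcal E_{\mathbb Z_n}([I])\big]_{I\in V(\mathscr G)}$ is the $\mathscr G$-generalized join of the edgeless graphs $\mathcal E_{\mathbb Z_n}([I])\cong\overline K_{\prod_{i\notin\Xi_I}m_i}$, with $\mathscr G\cong\mathbb{AIG}(\mathbb Z_{p_1p_2\cdots p_k})$.
   Context: Primes $p_1<\dots<p_k$, positive integers $m_i$. Nonzero proper ideals of $\mathbb Z_n$ are uniquely $\langle p_1^{r_1}\cdots p_k^{r_k}\rangle$, $0\le r_i\le m_i$, $(r_i)\ne(0,\dots,0),(m_1,\dots,m_k)$; such an ideal is essential iff $r_j\ne m_j$ for all $j$. Essential ideal graph $\mathcal E_{\mathbb Z_n}$: vertices the nonzero proper ideals, distinct $I,K$ adjacent iff $I+K$ is essential. $\mathscr U$ = nonzero proper nonessential ideals; $\Xi_I=\{i:r_i=m_i\}$; $I\preccurlyeq J$ iff $\Xi_I=\Xi_J$, class $[I]$, and $\mathcal E_{\mathbb Z_n}([I])$ the induced subgraph on $[I]$. $\mathscr G$: vertex set the $2^k-2$ ideals $\langle\prod_{i\in S}p_i^{m_i}\rangle$, $S$ nonempty proper subset of $\{1,\dots,k\}$, adjacent iff index sets disjoint. The $\mathscr G$-generalized join $\mathscr G[\Gamma_v]_{v}$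 replaces each vertex $v$ of $\mathscr G$ by $\Gamma_v$ and joins all vertices of $\Gamma_u$ to all vertices of $\Gamma_v$ when $u\sim v$. $\Gamma_1\vee\Gamma_2$ is the join. $\mathbb{AIG}(R)$: vertices nonzero ideals annihilated by some nonzero ideal, $I\sim K$ iff $IK=0$. *)

From HB Require Import structures.
From mathcomp Require Import all_boot all_order all_algebra.
Set Implicit Arguments. Unset Strict Implicit. Unset Printing Implicit Defensive.
Import GRing.Theory.

Record graph := Graph { vtx : finType; adj : rel vtx }.

Definition giso (G1 G2 : graph) : Prop :=
  exists f : vtx G1 -> vtx G2, bijective f /\ forall x y, adj (f x) (f y) = adj x y.

Definition Kcomplete (m : nat) : graph := @Graph 'I_m (fun x y => x != y).
Definition Kedgeless (t : nat) : graph := @Graph 'I_t (fun _ _ => false).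

Definition gjoin2 (A B : graph) : graph :=
  @Graph (vtx A + vtx B)%type
    (fun x y => match x, y with
                | inl a, inl a' => adj a a'
                | inr b, inr b' => adj b b'
                | _, _ => true end).

Definition isl (A B : Type) (x : A + B) : bool := if x is inl _ then true else false.

Definition gjoin (G : graph) (Gam : vtx G -> graph) : graph :=
  @Graph {v : vtx G & vtx (Gam v)}
    (fun x y => if tag x == tag y then adj (tagged x) (tagged_as x y)
                else adj (tag x) (tag y)).

Local Open Scope ring_scope.

Section Ideals.
Variable n : nat.

Definition is_ideal (I : {set 'Z_n}) : bool :=
  [&& (0 : 'Z_n) \in I,
      [forall x in I, forall y in I, x + y \in I] &
      [forall a : 'Z_n, forall x in I, a * x \in I]].

Definition nzproper (I : {set 'Z_n}) : bool :=
  [&& is_ideal I, I != [set 0] & I != [set: 'Z_n]].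

Definition essential (I : {set 'Z_n}) : bool :=
  [&& is_ideal I, I != [set 0] &
      [forall K : {set 'Z_n}, (is_ideal K && (K != [set 0])) ==> (I :&: K != [set 0])]].

Definition isum (I K : {set 'Z_n}) : {set 'Z_n} := [set x + y | x in I, y in K].

Definition pid (a : 'Z_n) : {set 'Z_n} := [set a * x | x : 'Z_n].

Definition EV := {I : {set 'Z_n} | nzproper I}.
Definition EG : graph :=
  @Graph EV (fun I J => (I != J) && essential (isum (val I) (val J))).

(* the canonical generator d | n with I = <d>: least positive x <= n with x in I *)
Definition gen (I : {set 'Z_n}) : nat :=
  head n [seq x <- iota 1%N n | (x%:R : 'Z_n) \in I].

Variables (k : nat) (p m : 'I_k -> nat).

(* Xi_I = { i : r_i = m_i } where I = <prod p_i^{r_i}> *)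
Definition Xi (I : {set 'Z_n}) : {set 'I_k} :=
  [set i | logn (p i) (gen I) == m i].

Definition pidS (S : {set 'I_k}) : {set 'Z_n} :=
  pid ((\prod_(i in S) p i ^ m i)%N)%:R.

Definition Gvert (I : {set 'Z_n}) : bool :=
  [exists S : {set 'I_k}, [&& S != set0, S != [set: 'I_k] & I == pidS S]].
Definition GV := {I : {set 'Z_n} | Gvert I}.
Definition GG : graph :=
  @Graph GV (fun I J => [exists S : {set 'I_k}, exists T : {set 'I_k},
                           [&& val I == pidS S, val J == pidS T & [disjoint S & T]]]).

Definition block (v : GV) : graph :=
  @Graph {J : EV | Xi (val J) == Xi (val v)} (fun a b => @adj EG (val a) (val b)).

Definition Hgraph : graph := @gjoin GG block.

End Ideals.

Section AIG.
Variable r : nat.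
Definition annih (I K : {set 'Z_r}) : bool := [forall x in I, forall y in K, x * y == 0].
Definition AV := {I : {set 'Z_r} |
  [&& is_ideal I, I != [set 0] &
      [exists K : {set 'Z_r}, [&& is_ideal K, K != [set 0] & annih I K]]]}.
Definition AIG : graph := @Graph AV (fun I J => (I != J) && annih (val I) (val J)).
End AIG.

From mathcomp Require Import all_boot all_order all_algebra zify.
Set Implicit Arguments. Unset Strict Implicit. Unset Printing Implicit Defensive.
Import GRing.Theory.

(** Every ideal of Z_n is the set of multiples of the least positive integer
    it contains, a divisor of n; writing that generator as prod p_i^(r_i)
    identifies ideals with exponent vectors r <= m.  Sums of ideals take the
    pointwise minimum of exponent vectors and intersections the pointwise
    maximum, so Xi (I + J) = Xi I :&: Xi J, and I is essential iff Xi I is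
    empty (if j \in Xi I, the ideal with Xi = [set~ j] meets I in 0).  Hence
    two vertices of E are adjacent iff they are distinct with disjoint Xi: the
    essential ideals form a clique joined to everything, and the other
    vertices fall into independent classes Xi = S, two classes being joined
    iff their index sets are disjoint.  Counting exponent vectors gives the
    class sizes.  In Z_(p_1...p_k) an ideal is determined by Xi and
    annihilation means Xi I :|: Xi J = setT, so S |-> ~: S is an isomorphism
    from G onto the annihilating-ideal graph. *)

Lemma head_filter_iota_min (P : pred nat) a l z y :
  P y -> y \in iota a l ->
  let h := head z (filter P (iota a l)) in [/\ h \in iota a l, P h & h <= y].
Proof.
move=> Py yin; have : y \in filter P (iota a l) by rewrite mem_filter Py.
have := sorted_filter ltn_trans P (iota_ltn_sorted a l).
have := mem_filter P ^~ (iota a l).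
case: (filter P _) => //= h s hs /(order_path_min ltn_trans) min_h.
have /andP[Ph hin] : P h && (h \in iota a l) by rewrite -hs mem_head.
rewrite inE => /predU1P[->|ys]; first by split.
by split => //; apply: ltnW; move/allP: min_h; apply.
Qed.

Lemma minn_eq_bound a b c : a <= c -> b <= c -> (minn a b == c) = (a == c) && (b == c).
Proof. by move=> ac bc; apply/idP/idP; lia. Qed.

Lemma maxn_eq_bound a b c : a <= c -> b <= c -> (maxn a b == c) = (a == c) || (b == c).
Proof. by move=> ac bc; apply/idP/idP; lia. Qed.

Lemma setTPn (T : finType) (A : {set T}) : reflect (exists x, x \notin A) (A != setT).
Proof.
rewrite -(inj_eq (can_inj (@setCK T))) setCT.
by apply: (iffP (set0Pn _)) => -[x xA]; exists x; rewrite inE in xA *.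
Qed.

Lemma setC_eq0 (T : finType) (A : {set T}) : (~: A == set0) = (A == setT).
Proof. by rewrite -setCT (inj_eq (@setC_inj T)). Qed.

Lemma setC_eqT (T : finType) (A : {set T}) : (~: A == setT) = (A == set0).
Proof. by rewrite -setC0 (inj_eq (@setC_inj T)). Qed.

Lemma card_ord_bij (T : finType) N : #|T| = N -> exists f : T -> 'I_N, bijective f.
Proof.
move=> cardT; exists (fun x => cast_ord cardT (enum_rank x)).
exists (fun i => enum_val (cast_ord (esym cardT) i)) => [x|i].
  by rewrite cast_ordK enum_rankK.
by rewrite enum_valK cast_ordKV.
Qed.

Lemma inj_surj_bij (T T' : finType) (f : T -> T') :
  injective f -> (forall y, exists x, f x = y) -> bijective f.
Proof.
move=> f_inj /fin_all_exists[g gK]; apply: inj_card_bij f_inj _.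
exact: leq_card (can_inj gK).
Qed.

Section ZnIdeals.
Variable n : nat.
Hypothesis n_gt1 : 1 < n.
Local Notation Zn := 'Z_n.
Implicit Types I J : {set Zn}.

Definition multiples (d : nat) : {set Zn} := [set z : Zn | d %| val z].

Lemma val_natr x : val (x%:R : Zn)%R = x %% n.
Proof. exact: val_Zp_nat. Qed.

Lemma val_lt (z : Zn) : val z < n.
Proof. by have := ltn_ord z; rewrite [X in _ < X]Zp_cast. Qed.

Lemma dvdn_modn d x : d %| n -> (d %| x %% n) = (d %| x).
Proof. by move=> dn; rewrite {2}(divn_eq x n) dvdn_addr // dvdn_mull. Qed.

Lemma mem_multiples d x : d %| n -> (x%:R%R \in multiples d) = (d %| x).
Proof. by move=> dn; rewrite inE val_natr dvdn_modn. Qed.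

Section Ideal.
Variable I : {set Zn}.
Hypothesis idealI : is_ideal I.

Lemma ideal0 : 0%R \in I.
Proof. by case/and3P: idealI. Qed.

Lemma idealD x y : x \in I -> y \in I -> (x + y)%R \in I.
Proof.
by case/and3P: idealI => _ /forall_inP addI _ xI yI; move/forall_inP: (addI x xI); apply.
Qed.

Lemma idealMl a x : x \in I -> (a * x)%R \in I.
Proof. by case/and3P: idealI => _ _ /forallP mulI xI; move/forall_inP: (mulI a); apply. Qed.

Lemma gen_spec : [/\ 0 < gen I <= n, (gen I)%:R%R \in I &
  forall y, 0 < y <= n -> y%:R%R \in I -> gen I <= y].
Proof.
have n_in : n \in iota 1 n by rewrite mem_iota add1n ltnS leqnn ltnW.
pose inI x := (x%:R : Zn)%R \in I.
have n_inI : inI n by rewrite /inI pchar_Zp // ideal0.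
have [gen_in gen_I _] := head_filter_iota_min n n_inI n_in.
split => // [|y /andP[y_gt0 y_le] yI].
  by move: gen_in; rewrite mem_iota add1n ltnS.
have y_in : y \in iota 1 n by rewrite mem_iota add1n ltnS y_gt0.
by have [] := head_filter_iota_min n (yI : inI y) y_in.
Qed.

Lemma gen_gt0 : 0 < gen I.
Proof. by case: gen_spec => /andP[]. Qed.

Lemma gen_mem : ((gen I)%:R : Zn)%R \in I.
Proof. by case: gen_spec. Qed.

Lemma natr_mem_ideal x : ((x%:R : Zn)%R \in I) = (gen I %| x).
Proof.
have [/andP[_ gen_le] _ gen_min] := gen_spec.
apply/idP/idP => [xI|/dvdnP[q ->]]; last by rewrite natrM idealMl ?gen_mem.
have mod_I : ((x %% gen I)%:R : Zn)%R \in I.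
  have -> : ((x %% gen I)%:R = x%:R - (x %/ gen I)%:R * (gen I)%:R :> Zn)%R.
    by rewrite {2}(divn_eq x (gen I)) natrD natrM addrAC subrr add0r.
  by rewrite idealD // -mulNr idealMl ?gen_mem.
have mod_lt : x %% gen I < gen I by rewrite ltn_mod gen_gt0.
have mod_le : x %% gen I <= n := leq_trans (ltnW mod_lt) gen_le.
rewrite /dvdn -leqn0 leqNgt; apply: contraL mod_lt => mod_gt0.
by rewrite -leqNgt gen_min ?mod_gt0.
Qed.

Lemma mem_ideal z : (z \in I) = (gen I %| val z).
Proof. by rewrite -natr_mem_ideal natr_Zp. Qed.

Lemma gen_dvdn : gen I %| n.
Proof. by rewrite -natr_mem_ideal pchar_Zp // ideal0. Qed.

Lemma ideal_multiples : I = multiples (gen I).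
Proof. by apply/setP => z; rewrite inE mem_ideal. Qed.

Lemma ideal0_gen : (I == [set 0%R]) = (gen I == n).
Proof.
apply/eqP/eqP => [I0|gen_n].
  have : ((gen I)%:R : Zn)%R \in [set 0%R] by rewrite -I0 gen_mem.
  rewrite inE => /eqP/(congr1 val); rewrite val_natr => /eqP n_dvd.
  by apply/eqP; rewrite eqn_dvd gen_dvdn.
by apply/setP => z; rewrite mem_ideal gen_n inE /dvdn modn_small ?val_lt.
Qed.

Lemma idealT_gen : (I == setT) = (gen I == 1%N).
Proof.
rewrite -dvdn1 -natr_mem_ideal; apply/eqP/idP => [->|oneI]; first by rewrite inE.
by apply/setP => z; rewrite inE -[z]mulr1 idealMl.
Qed.

End Ideal.

Lemma multiples_ideal d : d %| n -> is_ideal (multiples d).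
Proof.
move=> dn; apply/and3P; split; first by rewrite inE dvdn0.
  apply/forall_inP => x; rewrite inE => dx; apply/forall_inP => y; rewrite inE => dy.
  by rewrite -(natr_Zp x) -(natr_Zp y) -natrD mem_multiples // dvdn_add.
apply/forallP => a; apply/forall_inP => x; rewrite inE => dx.
by rewrite -(natr_Zp a) -(natr_Zp x) -natrM mem_multiples // dvdn_mull.
Qed.

Lemma gen_multiples d : d %| n -> gen (multiples d) = d.
Proof.
move=> dn; have gen_dvd x : (gen (multiples d) %| x) = (d %| x).
  by rewrite -natr_mem_ideal ?multiples_ideal // mem_multiples.
by apply/eqP; rewrite eqn_dvd gen_dvd dvdnn -gen_dvd dvdnn.
Qed.

Lemma pid_multiples d : d %| n -> pid (d%:R : Zn)%R = multiples d.
Proof.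
move=> dn; apply/setP => z; apply/imsetP/idP => [[x _ ->]|]; last rewrite inE => dz.
  by rewrite -(natr_Zp x) -natrM mem_multiples // dvdn_mulr.
by exists (val z %/ d)%:R%R; rewrite // -natrM mulnC divnK // natr_Zp.
Qed.

Lemma isum_ideal I J : is_ideal I -> is_ideal J -> is_ideal (isum I J).
Proof.
move=> idI idJ; apply/and3P; split.
- by apply/imset2P; exists 0%R 0%R; rewrite ?addr0 ?ideal0.
- apply/forall_inP => _ /imset2P[a b aI bJ ->]; apply/forall_inP => _ /imset2P[c d cI dJ ->].
  by apply/imset2P; exists (a + c)%R (b + d)%R; rewrite ?idealD // addrACA.
- apply/forallP => u; apply/forall_inP => _ /imset2P[a b aI bJ ->].
  by apply/imset2P; exists (u * a)%R (u * b)%R; rewrite ?idealMl // mulrDr.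
Qed.

Lemma gen_isum I J : is_ideal I -> is_ideal J -> gen (isum I J) = gcdn (gen I) (gen J).
Proof.
move=> idI idJ; have idIJ := isum_ideal idI idJ.
have gen_dvd x : x%:R%R \in isum I J -> gen (isum I J) %| x by rewrite natr_mem_ideal.
have gen_dvdI : gen (isum I J) %| gen I.
  by apply: gen_dvd; apply/imset2P; exists (gen I)%:R%R 0%R; rewrite ?addr0 ?gen_mem ?ideal0.
have gen_dvdJ : gen (isum I J) %| gen J.
  by apply: gen_dvd; apply/imset2P; exists 0%R (gen J)%:R%R; rewrite ?add0r ?gen_mem ?ideal0.
apply/eqP; rewrite eqn_dvd dvdn_gcd gen_dvdI gen_dvdJ /=.
have /imset2P[x y xI yJ gen_xy] := gen_mem idIJ.
have gcd_dvdn : gcdn (gen I) (gen J) %| n := dvdn_trans (dvdn_gcdl _ _) (gen_dvdn idI).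
rewrite -(dvdn_modn _ gcd_dvdn) -val_natr gen_xy -(natr_Zp x) -(natr_Zp y) -natrD.
rewrite val_natr dvdn_modn // dvdn_add //.
  by apply: dvdn_trans (dvdn_gcdl _ _) _; rewrite -mem_ideal.
by apply: dvdn_trans (dvdn_gcdr _ _) _; rewrite -mem_ideal.
Qed.

Lemma setI_multiples I J : is_ideal I -> is_ideal J ->
  I :&: J = multiples (lcmn (gen I) (gen J)).
Proof. by move=> idI idJ; apply/setP => z; rewrite !inE dvdn_lcm !mem_ideal. Qed.

Lemma setI_ideal I J : is_ideal I -> is_ideal J -> is_ideal (I :&: J).
Proof.
move=> idI idJ; rewrite setI_multiples //; apply: multiples_ideal.
by rewrite dvdn_lcm !gen_dvdn.
Qed.

Lemma annih_gen I J : is_ideal I -> is_ideal J -> annih I J = (n %| gen I * gen J).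
Proof.
move=> idI idJ; apply/forall_inP/idP => [annIJ|n_dvd x xI].
  have /forall_inP/(_ _ (gen_mem idJ))/eqP := annIJ _ (gen_mem idI).
  by rewrite -natrM => /(congr1 val); rewrite val_natr => /eqP.
apply/forall_inP => y yJ; rewrite -(natr_Zp x) -(natr_Zp y) -natrM.
rewrite -(inj_eq val_inj) val_natr /= -/(dvdn n _).
by apply: dvdn_trans n_dvd _; rewrite dvdn_mul // -mem_ideal.
Qed.

End ZnIdeals.

Section PrimePowerProducts.
Variables (k : nat) (p : 'I_k -> nat).
Hypothesis p_prime : forall i, prime (p i).
Hypothesis p_inj : injective p.
Implicit Types e f : 'I_k -> nat.

Definition prodpow e := \prod_(i < k) p i ^ e i.

Lemma prodpow_gt0 e : 0 < prodpow e.
Proof. by apply: prodn_gt0 => i; rewrite expn_gt0 prime_gt0. Qed.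

Lemma prodpow0 : prodpow (fun=> 0) = 1.
Proof. by rewrite /prodpow big1 // => i _; rewrite expn0. Qed.

Lemma prodpow_gt1 e i : 0 < e i -> 1 < prodpow e.
Proof.
move=> e_gt0; rewrite /prodpow (bigD1 i) //=; apply: leq_trans (leq_pmulr _ _).
  by rewrite -(exp1n (e i)) ltn_exp2r // prime_gt1.
by rewrite prodn_gt0 // => j; rewrite expn_gt0 prime_gt0.
Qed.

Lemma logn_prodpow q e : logn q (prodpow e) = \sum_(i < k | q == p i) e i.
Proof.
have pe_gt0 i : 0 < p i ^ e i by rewrite expn_gt0 prime_gt0.
rewrite /prodpow big_mkcond /=; elim: (index_enum _) => [|i s IH]; first by rewrite !big_nil logn1.
rewrite !big_cons lognM ?prodn_gt0 // lognX logn_prime // IH.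
by case: eqP; rewrite ?muln1 ?muln0.
Qed.

Lemma prodpowK e j : logn (p j) (prodpow e) = e j.
Proof.
by rewrite logn_prodpow (big_pred1 j) // => i; rewrite eq_sym (inj_eq p_inj).
Qed.

Lemma dvdn_prodpow e x : 0 < x -> (prodpow e %| x) = [forall i, e i <= logn (p i) x].
Proof.
move=> x_gt0; apply/idP/forallP => [ex_dvd i|e_le].
  by rewrite -pfactor_dvdn // (dvdn_trans _ ex_dvd) // pfactor_dvdn ?prodpow_gt0 ?prodpowK.
apply/dvdn_partP => [|q]; first exact: prodpow_gt0.
rewrite inE /= -logn_gt0 logn_prodpow => /lt0n_neq0; rewrite sum_nat_eq0 => /forall_inPn.
by case=> i /eqP -> _; rewrite p_part prodpowK pfactor_dvdn.
Qed.

Lemma prodpow_of_dvdn e x : x %| prodpow e -> x = prodpow (fun i => logn (p i) x).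
Proof.
move=> x_dvd; have x_gt0 := dvdn_gt0 (prodpow_gt0 e) x_dvd.
apply: eqn_from_log; rewrite ?prodpow_gt0 // => q; rewrite logn_prodpow.
case: (boolP [exists i, q == p i]) => [/existsP[i /eqP ->]|/existsPn q_notp].
  by rewrite (big_pred1 i) // => j; rewrite eq_sym (inj_eq p_inj).
have no_p : (fun i => q == p i) =1 xpred0 by move=> i; apply/negbTE.
rewrite big_pred0 //; apply/eqP; rewrite -leqn0.
by have := dvdn_leq_log q (prodpow_gt0 e) x_dvd; rewrite logn_prodpow big_pred0.
Qed.

Lemma dvdn_prodpow2 e f : (prodpow e %| prodpow f) = [forall i, e i <= f i].
Proof. by rewrite dvdn_prodpow ?prodpow_gt0 //; apply: eq_forallb => i; rewrite prodpowK. Qed.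

Lemma prodpowD e f : prodpow e * prodpow f = prodpow (fun i => e i + f i).
Proof. by rewrite /prodpow -big_split; apply: eq_bigr => i _; rewrite expnD. Qed.

End PrimePowerProducts.

Section Exponents.
Variables (k : nat) (p m : 'I_k -> nat).
Hypothesis p_prime : forall i, prime (p i).
Hypothesis p_inj : injective p.
Hypothesis m_gt0 : forall i, 0 < m i.
Hypothesis k_gt0 : 0 < k.

Local Notation n := (prodpow p m).
Local Notation Zn := 'Z_n.
Implicit Types (I J : {set Zn}) (e : 'I_k -> nat).

Lemma n_gt1 : 1 < n.
Proof. exact: (prodpow_gt1 p_prime (m_gt0 (Ordinal k_gt0))). Qed.

Definition expo I i := logn (p i) (gen I).

Lemma dvdn_prodpow_n e : (forall i, e i <= m i) -> prodpow p e %| n.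
Proof. by move=> e_le; rewrite dvdn_prodpow2 //; apply/forallP. Qed.

Lemma multiples_prodpow_ideal e : (forall i, e i <= m i) -> is_ideal (multiples n (prodpow p e)).
Proof. by move=> e_le; apply: multiples_ideal n_gt1 _ (dvdn_prodpow_n e_le). Qed.

Lemma expo_multiples e : (forall i, e i <= m i) -> expo (multiples n (prodpow p e)) =1 e.
Proof. by move=> e_le i; rewrite /expo gen_multiples ?n_gt1 ?dvdn_prodpow_n ?prodpowK. Qed.

Section Ideal.
Variable I : {set Zn}.
Hypothesis idealI : is_ideal I.

Lemma gen_prodpow : gen I = prodpow p (expo I).
Proof. exact: prodpow_of_dvdn (gen_dvdn n_gt1 idealI). Qed.

Lemma expo_le i : expo I i <= m i.
Proof.
rewrite /expo -(prodpowK p_prime p_inj m i).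
by rewrite dvdn_leq_log ?prodpow_gt0 ?gen_dvdn ?n_gt1.
Qed.

Lemma ideal_prodpow : I = multiples n (prodpow p (expo I)).
Proof. by rewrite -gen_prodpow; exact: (ideal_multiples n_gt1 idealI). Qed.

Lemma mem_Xi i : (i \in Xi p m I) = (expo I i == m i).
Proof. by rewrite inE. Qed.

Lemma ideal0_Xi : (I == [set 0%R]) = (Xi p m I == setT).
Proof.
rewrite (ideal0_gen n_gt1 idealI) gen_prodpow; apply/eqP/eqP => [gen_n|Xi_T].
  apply/setP => i; rewrite mem_Xi inE -(prodpowK p_prime p_inj (expo I)) gen_n.
  by rewrite (prodpowK p_prime p_inj) eqxx.
by apply: eq_bigr => i _; have := mem_Xi i; rewrite Xi_T inE => /esym/eqP ->.
Qed.

Lemma idealT_expo : (I == setT) = [forall i, expo I i == 0].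
Proof.
rewrite (idealT_gen n_gt1 idealI) gen_prodpow -dvdn1 -(prodpow0 p) dvdn_prodpow2 //.
by apply: eq_forallb => i; rewrite leqn0.
Qed.

End Ideal.

Lemma expo_isum I J i : is_ideal I -> is_ideal J ->
  expo (isum I J) i = minn (expo I i) (expo J i).
Proof. by move=> idI idJ; rewrite /expo gen_isum ?n_gt1 // logn_gcd ?gen_gt0 ?n_gt1. Qed.

Lemma expo_setI I J i : is_ideal I -> is_ideal J ->
  expo (I :&: J) i = maxn (expo I i) (expo J i).
Proof.
move=> idI idJ; rewrite /expo setI_multiples ?n_gt1 // gen_multiples ?n_gt1 //.
  by rewrite logn_lcm ?gen_gt0 ?n_gt1.
by rewrite dvdn_lcm !gen_dvdn ?n_gt1.
Qed.

Lemma Xi_isum I J : is_ideal I -> is_ideal J -> Xi p m (isum I J) = Xi p m I :&: Xi p m J.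
Proof.
move=> idI idJ; apply/setP => i.
by rewrite in_setI !mem_Xi expo_isum // minn_eq_bound ?expo_le.
Qed.

Lemma Xi_setI I J : is_ideal I -> is_ideal J -> Xi p m (I :&: J) = Xi p m I :|: Xi p m J.
Proof.
move=> idI idJ; apply/setP => i.
by rewrite in_setU !mem_Xi expo_setI // maxn_eq_bound ?expo_le.
Qed.

Definition m_on (S : {set 'I_k}) i := if i \in S then m i else 0.

Lemma m_on_le S i : m_on S i <= m i.
Proof. by rewrite /m_on; case: ifP. Qed.

Lemma pidS_multiples S : pidS n p m S = multiples n (prodpow p (m_on S)).
Proof.
rewrite /pidS -pid_multiples ?n_gt1 ?dvdn_prodpow_n //; last exact: m_on_le.
rewrite /prodpow /m_on; congr (pid _%:R%R).
by rewrite big_mkcond; apply: eq_bigr => i _; case: ifP.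
Qed.

Lemma pidS_ideal S : is_ideal (pidS n p m S).
Proof. by rewrite pidS_multiples; apply: multiples_prodpow_ideal => i; apply: m_on_le. Qed.

Lemma Xi_pidS S : Xi p m (pidS n p m S) = S.
Proof.
apply/setP => i; rewrite mem_Xi pidS_multiples expo_multiples => [|j]; last exact: m_on_le.
by rewrite /m_on; case: ifP => _; rewrite ?eqxx // ltn_eqF.
Qed.

Lemma setT_neq0 : [set: 'I_k] != set0.
Proof. by apply/set0Pn; exists (Ordinal k_gt0). Qed.

Lemma essential_Xi I : is_ideal I -> essential I = (Xi p m I == set0).
Proof.
move=> idI; rewrite /essential idI ideal0_Xi //=.
have Xi_meet K : is_ideal K -> (I :&: K != [set 0%R]) = (Xi p m I :|: Xi p m K != setT).
  by move=> idK; rewrite ideal0_Xi ?setI_ideal ?n_gt1 // Xi_setI.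
apply/andP/idP => [[_ /forallP ess]|/eqP Xi0].
  apply/negPn/negP => /set0Pn[j jXi].
  pose K := pidS n p m (~: [set j]).
  have /implyP := ess K; rewrite pidS_ideal ideal0_Xi ?pidS_ideal // Xi_meet ?pidS_ideal //.
  have jT : [set~ j] != setT by apply/eqP => /setP/(_ j); rewrite !inE eqxx.
  have XiT : Xi p m I :|: [set~ j] = setT.
    by apply/setP => i; rewrite in_setU in_setC1 in_setT; case: eqP => [->|]; rewrite ?jXi ?orbT.
  by rewrite Xi_pidS jT XiT eqxx => /(_ isT).
split; first by rewrite Xi0 eq_sym setT_neq0.
apply/forallP => K; apply/implyP => /andP[idK K0].
by rewrite Xi_meet // Xi0 set0U -ideal0_Xi.
Qed.

Lemma annih_expo I J : is_ideal I -> is_ideal J ->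
  annih I J = [forall i, m i <= expo I i + expo J i].
Proof.
move=> idI idJ; rewrite annih_gen ?n_gt1 // (gen_prodpow idI) (gen_prodpow idJ).
by rewrite prodpowD dvdn_prodpow2.
Qed.

Lemma EV_ideal (x : EV n) : is_ideal (val x).
Proof. by case/and3P: (valP x). Qed.

Lemma adj_EG (x y : EV n) :
  @adj (EG n) x y = (x != y) && [disjoint Xi p m (val x) & Xi p m (val y)].
Proof.
by rewrite /= essential_Xi ?isum_ideal ?EV_ideal ?n_gt1 // Xi_isum ?EV_ideal // setI_eq0.
Qed.

Definition expvec := {dffun forall i : 'I_k, 'I_(m i).+1}.

Definition exponents (x : EV n) : expvec := finfun (fun i => inord (expo (val x) i)).

Lemma exponentsE x i : val (exponents x i) = expo (val x) i.
Proof. by rewrite ffunE /= inordK // ltnS expo_le ?EV_ideal. Qed.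

Lemma exponents_inj : injective exponents.
Proof.
move=> x y exy; apply: val_inj; rewrite (ideal_prodpow (EV_ideal x)) (ideal_prodpow (EV_ideal y)).
by congr (multiples n _); apply: eq_bigr => i _; rewrite -!exponentsE exy.
Qed.

Lemma exponents_onto (a : expvec) :
  [exists i, a i != ord_max] -> [exists i, a i != ord0] -> exists x, exponents x = a.
Proof.
move=> /existsP[i /eqP ai] /existsP[j /eqP aj].
pose e l := val (a l); have e_le l : e l <= m l by rewrite -ltnS ltn_ord.
have expo_e := expo_multiples e_le.
have nzproper_e : nzproper (multiples n (prodpow p e)).
  rewrite /nzproper multiples_prodpow_ideal // ideal0_Xi ?idealT_expo ?multiples_prodpow_ideal //=.
  apply/andP; split.
    apply/eqP => /setP/(_ i); rewrite mem_Xi in_setT expo_e => /eqP ei.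
    by apply: ai; apply: val_inj.
  by apply/forallPn; exists j; rewrite expo_e; apply/eqP => ej; apply: aj; apply: val_inj.
exists (Sub _ nzproper_e); apply/ffunP => i'; apply: val_inj.
by rewrite exponentsE expo_e.
Qed.

Lemma Xi_exponents x : Xi p m (val x) = [set i | exponents x i == ord_max].
Proof. by apply/setP => i; rewrite mem_Xi inE -(inj_eq val_inj) exponentsE. Qed.

Lemma exponents_neq0 x : [exists i, exponents x i != ord0].
Proof.
case/and3P: (valP x) => idx _; rewrite idealT_expo // => /forallPn[i expo_i].
by apply/existsP; exists i; rewrite -(inj_eq val_inj) exponentsE.
Qed.

Definition expvec0 : expvec := finfun (fun i => ord0).

Definition Xi_pattern (S : {set 'I_k}) : pred expvec :=
  [pred a : expvec | [forall i, (a i == ord_max) == (i \in S)]].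

Lemma card_Xi_pattern S : #|Xi_pattern S| = \prod_(i < k | i \notin S) m i.
Proof.
pose F i := [pred y : 'I_(m i).+1 | (y == ord_max) == (i \in S)].
have card_F i : #|F i| = if i \in S then 1 else m i.
  case: ifP => iS; first by rewrite (eq_card1 (x := ord_max)) // => y; rewrite !inE iS eqb_id.
  rewrite (eq_card (_ : F i =i predC1 ord_max)) ?cardC1 ?card_ord // => y.
  by rewrite !inE iS eqbF_neg.
rewrite (eq_card (_ : _ =i (family F : simpl_pred expvec))) => [|a]; last first.
  by rewrite !inE.
rewrite card_family foldrE big_map big_enum [RHS]big_mkcond /=.
by apply: eq_bigr => i _; rewrite card_F; case: (i \in S).
Qed.

Lemma expvec0_Xi_pattern S : (expvec0 \in Xi_pattern S) = (S == set0).
Proof.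
have ord0_max i : (ord0 == ord_max :> 'I_(m i).+1) = false := ltn_eqF (m_gt0 i).
apply/forallP/eqP => [pat0|-> i]; last by rewrite ffunE ord0_max inE.
by apply/setP => i; have := pat0 i; rewrite ffunE ord0_max inE eq_sym eqbF_neg => /negbTE.
Qed.

Lemma exponents_Xi_pattern x S :
  (exponents x \in [predD1 Xi_pattern S & expvec0]) = (Xi p m (val x) == S).
Proof.
have x0 : exponents x != expvec0.
  apply: contraTneq (exponents_neq0 x) => ->; apply/existsPn => i.
  by rewrite ffunE negbK.
rewrite !inE x0 Xi_exponents /=; apply/forallP/eqP => [pat|<- i]; last by rewrite inE.
by apply/setP => i; have := pat i; rewrite inE => /eqP.
Qed.

Lemma Xi_pattern_codom S : S != setT -> {subset [predD1 Xi_pattern S & expvec0] <= codom exponents}.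
Proof.
move=> ST a /andP[a0 /forallP pat].
have [||x <-] := @exponents_onto a; last exact: codom_f.
  have /setTPn[i iS] := ST; apply/existsP; exists i.
  by have := pat i; rewrite (negbTE iS) eqbF_neg.
apply: contraR a0 => /existsPn a0; apply/eqP/ffunP => i.
by rewrite ffunE; apply/eqP/negPn/a0.
Qed.

(* Subtracting (S == set0) discards the zero exponent vector, i.e. the whole ring. *)
Lemma card_Xi_class S : S != setT ->
  #|[set x : EV n | Xi p m (val x) == S]| = (\prod_(i < k | i \notin S) m i - (S == set0))%N.
Proof.
move=> ST; rewrite -card_Xi_pattern (cardD1 expvec0) expvec0_Xi_pattern addKn.
rewrite (eq_card (_ : _ =i [preim exponents of [predD1 Xi_pattern S & expvec0]])) => [|x].
  rewrite card_preim; last exact: exponents_inj.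
  apply: eq_card => a; rewrite inE; apply/andP/idP => [[]//|a_pat].
  by split => //; apply: Xi_pattern_codom ST a a_pat.
by rewrite !inE -exponents_Xi_pattern.
Qed.

Lemma EV_Xi_neqT (x : EV n) : Xi p m (val x) != setT.
Proof. by case/and3P: (valP x) => idx; rewrite ideal0_Xi. Qed.

Lemma GV_pidS (v : GV n p m) : val v = pidS n p m (Xi p m (val v)).
Proof. by case/existsP: (valP v) => S /and3P[_ _ /eqP ->]; rewrite Xi_pidS. Qed.

Lemma GV_Xi_neq0 (v : GV n p m) : Xi p m (val v) != set0.
Proof. by case/existsP: (valP v) => S /and3P[S0 _ /eqP ->]; rewrite Xi_pidS. Qed.

Lemma GV_Xi_neqT (v : GV n p m) : Xi p m (val v) != setT.
Proof. by case/existsP: (valP v) => S /and3P[_ ST /eqP ->]; rewrite Xi_pidS. Qed.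

Lemma GV_Xi_inj (v w : GV n p m) : Xi p m (val v) = Xi p m (val w) -> v = w.
Proof. by move=> Xi_vw; apply: val_inj; rewrite (GV_pidS v) (GV_pidS w) Xi_vw. Qed.

Lemma GV_of_Xi S : S != set0 -> S != setT -> exists v : GV n p m, Xi p m (val v) = S.
Proof.
move=> S0 ST; have Gv : Gvert p m (pidS n p m S) by apply/existsP; exists S; rewrite S0 ST eqxx.
by exists (Sub _ Gv); rewrite Xi_pidS.
Qed.

Lemma adj_GG (v w : GV n p m) : @adj (GG n p m) v w = [disjoint Xi p m (val v) & Xi p m (val w)].
Proof.
apply/existsP/idP => [[S /existsP[T /and3P[/eqP -> /eqP -> ST]]]|vw].
  by rewrite !Xi_pidS.
exists (Xi p m (val v)); apply/existsP; exists (Xi p m (val w)).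
by rewrite -(GV_pidS v) -(GV_pidS w) !eqxx.
Qed.

Lemma Xi_block (v : GV n p m) (J : vtx (block v)) : Xi p m (val (val J)) = Xi p m (val v).
Proof. exact/eqP/(valP J). Qed.

Lemma card_block (v : GV n p m) :
  #|vtx (block v)| = \prod_(i < k | i \notin Xi p m (val v)) m i.
Proof.
have := card_Xi_class (GV_Xi_neqT v); rewrite (negbTE (GV_Xi_neq0 v)) subn0 => <-.
by rewrite card_sig; apply: eq_card => x; rewrite !inE.
Qed.

Lemma block_edgeless (v : GV n p m) :
  giso (block v) (Kedgeless (\prod_(i < k | i \notin Xi p m (val v)) m i)).
Proof.
have [f f_bij] := card_ord_bij (card_block v); exists f; split => // J K.
change (false = @adj (EG n) (val J) (val K)).
by rewrite adj_EG !Xi_block -setI_eq0 setIid (negbTE (GV_Xi_neq0 v)) andbF.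
Qed.

Lemma card_essential : #|{: {x : EV n | essential (val x)}}| = (\prod_(i < k) m i - 1)%N.
Proof.
have set0_neqT : set0 != [set: 'I_k] by rewrite eq_sym setT_neq0.
have := card_Xi_class set0_neqT; rewrite eqxx (eq_bigl xpredT) => [<-|i]; last by rewrite inE.
by rewrite card_sig; apply: eq_card => x; rewrite !inE essential_Xi ?EV_ideal.
Qed.

Section JoinMap.
Local Notation N := (\prod_(i < k) m i - 1)%N.
Variable eb : 'I_N -> {x : EV n | essential (val x)}.
Hypothesis eb_bij : bijective eb.

Definition join_val (u : vtx (gjoin2 (Kcomplete N) (Hgraph n p m))) : EV n :=
  match u with inl a => val (eb a) | inr w => val (tagged w) end.

Lemma Xi_join_val u : (Xi p m (val (join_val u)) == set0) = isl u.
Proof.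
case: u => [a|[v J]] /=; last by rewrite Xi_block (negbTE (GV_Xi_neq0 v)).
by rewrite -essential_Xi ?EV_ideal ?(valP (eb a)).
Qed.

Lemma join_val_inj : injective join_val.
Proof.
move=> u w E; have := Xi_join_val u; rewrite E Xi_join_val.
case: u w E => [a|[v J]] [b|[w K]] //= E _; first by rewrite (bij_inj eb_bij (val_inj E)).
have vw : v = w by apply: GV_Xi_inj; rewrite -(Xi_block J) -(Xi_block K); congr (Xi p m (val _)).
by subst w; congr (inr (existT _ _ _)); exact: val_inj.
Qed.

Lemma join_val_surj x : exists u, join_val u = x.
Proof.
case: (boolP (essential (val x))) => [ess_x|].
  have [eb' ebK ebK'] := eb_bij; exists (inl (eb' (Sub x ess_x))).
  by rewrite /= ebK'.
rewrite essential_Xi ?EV_ideal // => Xi_x.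
have [v Xi_v] := GV_of_Xi Xi_x (EV_Xi_neqT x).
have J_block : Xi p m (val x) == Xi p m (val v) by rewrite Xi_v.
by exists (inr (existT _ v (Sub x J_block : vtx (block v)))).
Qed.

Lemma adj_join_val u w : @adj (EG n) (join_val u) (join_val w) = adj u w.
Proof.
case: u w => [a|[v J]] [b|[w K]]; last first.
  case: (v =P w) => [vw|vw]; first by subst w; rewrite /= eqxx tagged_asE.
  rewrite [RHS]/= (introF eqP vw) adj_EG -[RHS]/(@adj (GG n p m) v w) adj_GG !Xi_block.
  case: [disjoint _ & _]; rewrite ?andbF ?andbT //.
  by rewrite (inj_eq join_val_inj); apply/eqP => -[/vw].
all: have Xi0 c : Xi p m (val (join_val (inl c))) = set0 by apply/eqP; rewrite Xi_join_val.
all: by rewrite adj_EG (inj_eq join_val_inj) ?Xi0 -setI_eq0 ?set0I ?setI0 eqxx andbT.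
Qed.

End JoinMap.

Lemma EG_join_iso :
  exists f : vtx (EG n) -> vtx (gjoin2 (Kcomplete (\prod_(i < k) m i - 1)) (Hgraph n p m)),
    [/\ bijective f, forall x y, adj (f x) (f y) = adj x y &
         forall x, isl (f x) = essential (val x)].
Proof.
have [f0 [eb f0K ebK]] := card_ord_bij card_essential.
have eb_bij : bijective eb := Bijective ebK f0K.
have [f join_valK fK] := inj_surj_bij (join_val_inj eb_bij) (join_val_surj eb_bij).
exists f; split; first exact: Bijective fK join_valK.
  by move=> x y; rewrite -(adj_join_val eb_bij) !fK.
by move=> x; rewrite -(Xi_join_val eb) fK essential_Xi ?EV_ideal.
Qed.

End Exponents.

Section AnnihilatingIdealGraph.
Variables (k : nat) (p m : 'I_k -> nat).
Hypothesis p_prime : forall i, prime (p i).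
Hypothesis p_inj : injective p.
Hypothesis m_gt0 : forall i, 0 < m i.
Hypothesis k_gt0 : 0 < k.

Local Notation one := (fun _ : 'I_k => 1%N).
Local Notation r := (prodpow p one).
Local Notation n := (prodpow p m).
Let one_gt0 (i : 'I_k) : 0 < one i := isT.
Let ideal0_Xi1 := ideal0_Xi p_prime p_inj one_gt0 k_gt0.
Let expo_le1 := expo_le p_prime p_inj one_gt0 k_gt0.
Let ideal_prodpow1 := ideal_prodpow p_prime p_inj one_gt0 k_gt0.
Let pidS_multiples1 := pidS_multiples p_prime p_inj one_gt0 k_gt0.
Let annih_expo1 := annih_expo p_prime p_inj one_gt0 k_gt0.
Let pidS_ideal1 := pidS_ideal p_prime p_inj one_gt0 k_gt0.
Let Xi_pidS1 := Xi_pidS p_prime p_inj one_gt0 k_gt0.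
Implicit Types I J : {set 'Z_r}.

Lemma squarefree_pidS I : is_ideal I -> I = pidS r p one (Xi p one I).
Proof.
move=> idI; rewrite pidS_multiples1 {1}(ideal_prodpow1 idI).
congr (multiples r _); apply: eq_bigr => i _; rewrite /m_on mem_Xi.
by have := expo_le1 idI i; case: expo => [|[]].
Qed.

Lemma annih_Xi I J : is_ideal I -> is_ideal J -> annih I J = (Xi p one I :|: Xi p one J == setT).
Proof.
move=> idI idJ; rewrite annih_expo1 //.
have leI := expo_le1 idI.
have leJ := expo_le1 idJ.
apply/forallP/eqP => [cover|XiT i].
  apply/setP => i; rewrite in_setU !mem_Xi in_setT.
  by have := cover i; have := leI i; have := leJ i; lia.
have := in_setT i; rewrite -XiT in_setU !mem_Xi.
by have := leI i; have := leJ i; lia.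
Qed.

Lemma AV_Xi_neqT (I : AV r) : Xi p one (val I) != setT.
Proof. by case/and3P: (valP I) => idI; rewrite (ideal0_Xi1 idI). Qed.

Lemma AV_Xi_neq0 (I : AV r) : Xi p one (val I) != set0.
Proof.
case/and3P: (valP I) => idI _ /existsP[K /and3P[idK K0]].
rewrite annih_Xi // => /eqP XiIK; apply: contraNneq K0 => XiI0.
by rewrite (ideal0_Xi1 idK) -XiIK XiI0 set0U.
Qed.

Lemma pidS_AV S : S != set0 -> S != setT ->
  [&& is_ideal (pidS r p one S), pidS r p one S != [set 0%R] &
      [exists K, [&& is_ideal K, K != [set 0%R] & annih (pidS r p one S) K]]].
Proof.
move=> S0 ST; rewrite pidS_ideal1 ideal0_Xi1 ?pidS_ideal1 // Xi_pidS1 ST /=.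
apply/existsP; exists (pidS r p one (~: S)).
by rewrite pidS_ideal1 ideal0_Xi1 ?annih_Xi ?pidS_ideal1 // !Xi_pidS1 setC_eqT S0 setUCr eqxx.
Qed.

Let GV_Xi_neq0m := GV_Xi_neq0 p_prime p_inj m_gt0 k_gt0.
Let GV_Xi_neqTm := GV_Xi_neqT p_prime p_inj m_gt0 k_gt0.
Let adj_GGm := adj_GG p_prime p_inj m_gt0 k_gt0.

Lemma XiC_neq0 (v : GV n p m) : ~: Xi p m (val v) != set0.
Proof. by rewrite setC_eq0 GV_Xi_neqTm. Qed.

Lemma XiC_neqT (v : GV n p m) : ~: Xi p m (val v) != setT.
Proof. by rewrite setC_eqT GV_Xi_neq0m. Qed.

Definition AIG_vertex (v : GV n p m) : AV r :=
  Sub (pidS r p one (~: Xi p m (val v))) (pidS_AV (XiC_neq0 v) (XiC_neqT v)).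

Lemma Xi_AIG_vertex v : Xi p one (val (AIG_vertex v)) = ~: Xi p m (val v).
Proof. exact: Xi_pidS1. Qed.

Lemma AIG_vertex_ideal v : is_ideal (val (AIG_vertex v)).
Proof. exact: pidS_ideal1. Qed.

Lemma AIG_vertex_inj : injective AIG_vertex.
Proof.
move=> v w /(congr1 (fun A : AV r => Xi p one (val A))); rewrite !Xi_AIG_vertex => /setC_inj.
exact: GV_Xi_inj.
Qed.

Lemma AIG_vertex_surj (A : AV r) : exists v, AIG_vertex v = A.
Proof.
have [v Xi_v] : exists v : GV n p m, Xi p m (val v) = ~: Xi p one (val A).
  by apply: GV_of_Xi; rewrite ?setC_eq0 ?setC_eqT ?AV_Xi_neqT ?AV_Xi_neq0.
exists v; apply: val_inj; rewrite /= Xi_v setCK -squarefree_pidS //.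
by case/and3P: (valP A).
Qed.

Lemma adj_AIG_vertex v w : @adj (AIG r) (AIG_vertex v) (AIG_vertex w) = @adj (GG n p m) v w.
Proof.
rewrite adj_GGm /= annih_Xi ?AIG_vertex_ideal // !Xi_AIG_vertex -setCI setC_eqT setI_eq0.
case: (v =P w) => [<-|/eqP vw]; last by rewrite (inj_eq AIG_vertex_inj) vw.
by rewrite eqxx -setI_eq0 setIid (negbTE (GV_Xi_neq0m v)).
Qed.

Lemma GG_AIG_iso : giso (GG n p m) (AIG r).
Proof.
exists AIG_vertex; split; last exact: adj_AIG_vertex.
exact: inj_surj_bij AIG_vertex_inj AIG_vertex_surj.
Qed.

End AnnihilatingIdealGraph.

Theorem mainTheorem7 (k : nat) (p m : 'I_k -> nat)
  (hp : forall i, prime (p i))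
  (hlt : forall i j : 'I_k, i < j -> p i < p j)
  (hm : forall i, 0 < m i)
  (n : nat) (hn : n = \prod_(i < k) p i ^ m i)
  (hex : exists i, 1 < m i) :
  [/\ (exists f : vtx (EG n) ->
                  vtx (gjoin2 (Kcomplete (\prod_(i < k) m i - 1)) (Hgraph n p m)),
         [/\ bijective f,
             forall x y, adj (f x) (f y) = adj x y &
             forall x, isl (f x) = essential (val x)]),
      (forall v : GV n p m,
         giso (block v) (Kedgeless (\prod_(i < k | i \notin Xi p m (val v)) m i))) &
      giso (GG n p m) (AIG (\prod_(i < k) p i))].
Proof.
(* hex only serves to make k positive, which rules out the degenerate n = 1. *)
have [[i0 i0_lt] _] := hex.
have k_gt0 : 0 < k := leq_ltn_trans (leq0n i0) i0_lt.
have p_inj : injective p.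
  by move=> i j pij; apply: val_inj; case: (ltngtP i j) => // [/hlt|/hlt]; rewrite pij ltnn.
have -> : \prod_(i < k) p i = prodpow p (fun=> 1%N) by apply: eq_bigr => i _; rewrite expn1.
subst n; split.
- exact: EG_join_iso.
- exact: block_edgeless.
- exact: GG_AIG_iso.
Qed.
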